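(* Under the curve flow $\gamma_t=k_1\gamma''+k_2\gamma'+r_0\gamma$ with $r_0=-\big(k_2'+\tfrac13(k_1''+2k_1^2)\big)$, the curvature evolution is bi-Hamiltonian: \[ \begin{pmatrix}k_1\\ k_2\end{pmatrix}_t=\mathcal{P}\,\mathsf E\rho_2=\mathcal{Q}\,\mathsf E\rho_4, \] with $\rho_2=k_1k_2$ and $\rho_4=\tfrac13(k_1'')^2+k_1''(k_2'-k_1^2)-k_1(k_1')^2+(k_2')^2-k_1^2k_2'+\tfrac19k_1^4+2k_1k_2^2$. Hence $\int\rho_2\,\mathrm{d}x$ and $\int\rho_4\,\mathrm{d}x$ are conserved integrals (and so is $\int k_1\,\mathrm{d}x$).
   Context: $\gamma(x,t)$ is a family of nondegenerate curves in centroaffine $\mathbb R^3$ parametrized by centroaffine arclength $x$ ($\det(\gamma,\gamma',\gamma'')=1$), with $\gamma'''=(k_1\gamma)'+k_2\gamma$. $D=\partial/\partial x$; $\mathcal{P}=\begin{pmatrix}-2D^3+Dk_1+k_1D & -D^4+D^2k_1+2Dk_2+k_2D\\ D^4-k_1D^2+2k_2D+Dk_2 & \tfrac23(D^5+k_1Dk_1-k_1D^3-D^3k_1)+[k_2,D^2]\end{pmatrix}$, $\mathcal{Q}=\begin{pmatrix}0&D\\ D&0\end{pmatrix}$, and $\mathsf E f=\big(\sum_{j\ge0}(-D)^j\partial f/\partial k_1^{(j)},\ \sum_{j\ge0}(-D)^j\partial f/\partial k_2^{(j)}\big)^{\mathrm T}$ is the vector Euler operator. *)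

From Stdlib Require Import Reals.
From Coquelicot Require Import Coquelicot.
Open Scope R_scope.

(* Functions of (x, t); x = centroaffine arclength, t = time. *)

Definition dx (f : R -> R -> R) : R -> R -> R :=
  fun x t => Derive (fun y => f y t) x.
Definition dt (f : R -> R -> R) : R -> R -> R :=
  fun x t => Derive (fun s => f x s) t.

Fixpoint dpart (l : list bool) (f : R -> R -> R) : R -> R -> R :=
  match l with
  | nil => f
  | cons b l' => (if b then dx else dt) (dpart l' f)
  end.

Definition smooth2 (f : R -> R -> R) : Prop :=
  forall (l : list bool) (x t : R),
    ex_derive (fun y => dpart l f y t) x /\
    ex_derive (fun s => dpart l f x s) t /\
    continuous (fun p : R * R => dpart l f (fst p) (snd p)) (x, t).

Definition dxn (n : nat) (f : R -> R -> R) : R -> R -> R :=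
  fun x t => Derive_n (fun y => f y t) n x.

Definition det3 (u v w : nat -> R) : R :=
  u 0%nat * (v 1%nat * w 2%nat - v 2%nat * w 1%nat)
  - u 1%nat * (v 0%nat * w 2%nat - v 2%nat * w 0%nat)
  + u 2%nat * (v 0%nat * w 1%nat - v 1%nat * w 0%nat).

(* A differential function of (k1, k2) is a function rho a b of the jets
   a j = k1^(j), b j = k2^(j). *)
Definition jet (f : R -> R -> R) (t x : R) : nat -> R :=
  fun j => Derive_n (fun y => f y t) j x.

Definition upd (a : nat -> R) (j : nat) (s : R) : nat -> R :=
  fun i => if Nat.eqb i j then s else a i.

Definition pd1 (rho : (nat -> R) -> (nat -> R) -> R) (j : nat) (a b : nat -> R) : R :=
  Derive (fun s => rho (upd a j s) b) (a j).
Definition pd2 (rho : (nat -> R) -> (nat -> R) -> R) (j : nat) (a b : nat -> R) : R :=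
  Derive (fun s => rho a (upd b j s)) (b j).

(* Components of E rho = (sum_j (-D)^j d rho/d k1^(j), sum_j (-D)^j d rho/d k2^(j)),
   evaluated along (k1,k2)(., t); the sum is taken over j = 0..N, where N is
   (at least) the differential order of rho (higher terms vanish). *)
Definition Euler1 (N : nat) (rho : (nat -> R) -> (nat -> R) -> R)
  (k1 k2 : R -> R -> R) (t x : R) : R :=
  sum_f_R0 (fun j => (-1) ^ j *
     Derive_n (fun y => pd1 rho j (jet k1 t y) (jet k2 t y)) j x) N.
Definition Euler2 (N : nat) (rho : (nat -> R) -> (nat -> R) -> R)
  (k1 k2 : R -> R -> R) (t x : R) : R :=
  sum_f_R0 (fun j => (-1) ^ j *
     Derive_n (fun y => pd2 rho j (jet k1 t y) (jet k2 t y)) j x) N.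

Definition rho2 (a b : nat -> R) : R := a 0%nat * b 0%nat.
Definition rho4 (a b : nat -> R) : R :=
  1/3 * (a 2%nat)^2 + a 2%nat * (b 1%nat - (a 0%nat)^2)
  - a 0%nat * (a 1%nat)^2 + (b 1%nat)^2 - (a 0%nat)^2 * b 1%nat
  + 1/9 * (a 0%nat)^4 + 2 * a 0%nat * (b 0%nat)^2.
Definition rho_k1 (a b : nat -> R) : R := a 0%nat.

(* ---------- the Hamiltonian operators P and Q ----------
   K1, K2 : curvatures at a fixed time; (u, v) : the pair acted upon.
   Operator products are compositions, e.g. (k1 D k1) v = k1 * (k1 v)'. *)
Definition D (n : nat) (f : R -> R) : R -> R := Derive_n f n.
Definition mulf (f g : R -> R) : R -> R := fun y => f y * g y.

Definition Pop1 (K1 K2 u v : R -> R) (x : R) : R :=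
  (-2 * D 3 u x + D 1 (mulf K1 u) x + K1 x * D 1 u x)
  + (- D 4 v x + D 2 (mulf K1 v) x + 2 * D 1 (mulf K2 v) x + K2 x * D 1 v x).
Definition Pop2 (K1 K2 u v : R -> R) (x : R) : R :=
  (D 4 u x - K1 x * D 2 u x + 2 * K2 x * D 1 u x + D 1 (mulf K2 u) x)
  + (2/3 * (D 5 v x + K1 x * D 1 (mulf K1 v) x - K1 x * D 3 v x
            - D 3 (mulf K1 v) x)
     + (K2 x * D 2 v x - D 2 (mulf K2 v) x)).

Definition Qop1 (u v : R -> R) (x : R) : R := D 1 v x.
Definition Qop2 (u v : R -> R) (x : R) : R := D 1 u x.

Definition intdens (rho : (nat -> R) -> (nat -> R) -> R) (k1 k2 : R -> R -> R)
  (L t : R) : R :=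
  RInt (fun x => rho (jet k1 t x) (jet k2 t x)) 0 L.

(* Differentiating the structure equation in t and the flow three times in x, and
   comparing the two expressions for the mixed derivative of gamma''', leaves a relation
   A gamma + B gamma' = 0 whose coefficients are differential expressions in k1, k2 and
   their t-derivatives.  Since gamma, gamma', gamma'' form a unimodular frame, A = B = 0,
   which is the explicit evolution of (k1, k2).  Both Hamiltonian forms, and conservation
   laws rho_t = Phi_x with Phi a differential polynomial (hence periodic) for rho = k1,
   rho2, rho4, then reduce to polynomial identities.  These are checked by evaluating a
   small syntax of differential polynomials, whose symbolic x- and t-derivatives agree with
   the analytic ones on smooth fields. *)

From Pilot Require Import Defs.
From Stdlib Require Import Reals Lra FunctionalExtensionality List.
From Coquelicot Require Import Coquelicot.
Import ListNotations.
Open Scope R_scope.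

Lemma dpart_app l1 l2 f : dpart (l1 ++ l2) f = dpart l1 (dpart l2 f).
Proof. induction l1 as [|b l1 IH]; simpl; [reflexivity | rewrite IH; reflexivity]. Qed.

Lemma smooth2_dpart l f : smooth2 f -> smooth2 (dpart l f).
Proof. intros H l' x t. rewrite <- dpart_app. apply H. Qed.

Lemma Derive_n_dpart f w n x t :
  Derive_n (fun y => dpart w f y t) n x = dpart (repeat true n ++ w) f x t.
Proof.
  revert x; induction n as [|n IH]; intro x; simpl; [reflexivity|].
  rewrite (Derive_ext _ (fun y => dpart (repeat true n ++ w) f y t)) by (intro; apply IH).
  reflexivity.
Qed.

Lemma jet_dpart f t x n : jet f t x n = dpart (repeat true n) f x t.
Proof. unfold jet. pose proof (Derive_n_dpart f [] n x t) as E. rewrite app_nil_r in E. exact E. Qed.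

Lemma dxn_dpart f n x t : dxn n f x t = dpart (repeat true n) f x t.
Proof. apply jet_dpart. Qed.

Lemma dt_dx_comm g x t : smooth2 g -> dt (dx g) x t = dx (dt g) x t.
Proof.
  intro H. unfold dt, dx. symmetry. apply (Schwarz g x t).
  - exists (mkposreal 1 Rlt_0_1). intros u v _ _.
    destruct (H [] u v) as [H1 [H2 _]].
    destruct (H [false] u v) as [H3 _].
    destruct (H [true] u v) as [_ [H4 _]].
    repeat split; assumption.
  - apply continuity_2d_pt_filterlim. apply (H [true; false] x t).
  - apply continuity_2d_pt_filterlim. apply (H [false; true] x t).
Qed.

Lemma dpart_t_xn_comm f n x t : smooth2 f ->
  dpart (false :: repeat true n) f x t = dpart (repeat true n ++ [false]) f x t.
Proof.
  intro Hf. revert x t; induction n as [|n IH]; intros x t; [reflexivity|].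
  change (dt (dx (dpart (repeat true n) f)) x t
          = dx (dpart (repeat true n ++ [false]) f) x t).
  rewrite dt_dx_comm by (apply smooth2_dpart; assumption).
  unfold dx. apply Derive_ext. intro y. apply IH.
Qed.

Lemma dpart_periodic f L (Hper : forall x t, f (x + L) t = f x t) n x t :
  dpart (repeat true n) f (x + L) t = dpart (repeat true n) f x t.
Proof.
  rewrite <- !jet_dpart. unfold jet.
  rewrite <- (Derive_n_comp_trans (fun y => f y t)).
  apply Derive_n_ext. intro; apply Hper.
Qed.

Lemma continuity_2d_pt_swap (h : R -> R -> R) x t :
  continuous (fun p : R * R => h (fst p) (snd p)) (x, t) ->
  continuity_2d_pt (fun u v => h v u) t x.
Proof.
  intro H. apply continuity_2d_pt_filterlim.
  apply (continuous_comp_2 (U := prod_UniformSpace R_UniformSpace R_UniformSpace)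
           (@snd R R) (@fst R R) h (t, x)); [apply continuous_snd | apply continuous_fst | exact H].
Qed.

(** * Differential polynomials *)

Inductive dpoly : Type :=
  | Cst (r : R)
  | Var (v : nat) (w : list bool)
  | Add (p q : dpoly)
  | Mul (p q : dpoly).

Fixpoint eval (F : nat -> R -> R -> R) (p : dpoly) (x t : R) : R :=
  match p with
  | Cst r => r
  | Var v w => dpart w (F v) x t
  | Add p q => eval F p x t + eval F q x t
  | Mul p q => eval F p x t * eval F q x t
  end.

Fixpoint dpoly_dx (p : dpoly) : dpoly :=
  match p with
  | Cst _ => Cst 0
  | Var v w => Var v (true :: w)
  | Add p q => Add (dpoly_dx p) (dpoly_dx q)
  | Mul p q => Add (Mul (dpoly_dx p) q) (Mul p (dpoly_dx q))
  end.

Fixpoint dpoly_dt (p : dpoly) : dpoly :=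
  match p with
  | Cst _ => Cst 0
  | Var v w => Var v (false :: w)
  | Add p q => Add (dpoly_dt p) (dpoly_dt q)
  | Mul p q => Add (Mul (dpoly_dt p) q) (Mul p (dpoly_dt q))
  end.

Fixpoint dpoly_dxn (n : nat) (p : dpoly) : dpoly :=
  match n with O => p | S n => dpoly_dx (dpoly_dxn n p) end.

Fixpoint dpoly_pow (p : dpoly) (n : nat) : dpoly :=
  match n with O => Cst 1 | S n => Mul p (dpoly_pow p n) end.

Declare Scope dpoly_scope.
Delimit Scope dpoly_scope with dpoly.
Bind Scope dpoly_scope with dpoly.
Notation "# r" := (Cst r) (at level 1, format "# r") : dpoly_scope.
Infix "+" := Add : dpoly_scope.
Infix "*" := Mul : dpoly_scope.
Notation "- p" := (Mul (Cst (-1)) p) : dpoly_scope.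
Notation "p - q" := (Add p (Mul (Cst (-1)) q)) : dpoly_scope.
Infix "^" := dpoly_pow : dpoly_scope.

Definition k1x (n : nat) : dpoly := Var 0 (repeat true n).
Definition k2x (n : nat) : dpoly := Var 1 (repeat true n).
Definition gx (n : nat) : dpoly := Var 2 (repeat true n).

Definition kenv (k1 k2 : R -> R -> R) (v : nat) : R -> R -> R :=
  match v with O => k1 | _ => k2 end.
Definition frame_env (k1 k2 g : R -> R -> R) (v : nat) : R -> R -> R :=
  match v with O => k1 | 1 => k2 | _ => g end.

Lemma kenv_smooth k1 k2 : smooth2 k1 -> smooth2 k2 -> forall v, smooth2 (kenv k1 k2 v).
Proof. intros H1 H2 [|v]; assumption. Qed.

Lemma frame_env_smooth k1 k2 g :
  smooth2 k1 -> smooth2 k2 -> smooth2 g -> forall v, smooth2 (frame_env k1 k2 g v).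
Proof. intros H1 H2 Hg [|[|v]]; assumption. Qed.

Tactic Notation "simpl_dpoly" :=
  cbn [eval dpoly_dx dpoly_dt dpoly_dxn dpoly_pow k1x k2x gx kenv frame_env repeat app dpart].
Tactic Notation "simpl_dpoly" "in" ne_hyp_list(Hs) :=
  cbn [eval dpoly_dx dpoly_dt dpoly_dxn dpoly_pow k1x k2x gx kenv frame_env repeat app dpart] in Hs.

Section Eval.
Variable F : nat -> R -> R -> R.
Hypothesis HF : forall v, smooth2 (F v).

Lemma is_derive_eval_x p x t : is_derive (fun y => eval F p y t) x (eval F (dpoly_dx p) x t).
Proof.
  revert x; induction p as [r|v w|p IHp q IHq|p IHp q IHq]; intro x; simpl.
  - exact (is_derive_const r x).
  - apply Derive_correct, (HF v w x t).
  - apply (is_derive_plus (fun y => eval F p y t) (fun y => eval F q y t)); auto.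
  - apply (is_derive_mult (fun y => eval F p y t) (fun y => eval F q y t)); auto.
    exact Rmult_comm.
Qed.

Lemma is_derive_eval_t p x t : is_derive (fun s => eval F p x s) t (eval F (dpoly_dt p) x t).
Proof.
  revert t; induction p as [r|v w|p IHp q IHq|p IHp q IHq]; intro t; simpl.
  - exact (is_derive_const r t).
  - apply Derive_correct, (HF v w x t).
  - apply (is_derive_plus (fun s => eval F p x s) (fun s => eval F q x s)); auto.
  - apply (is_derive_mult (fun s => eval F p x s) (fun s => eval F q x s)); auto.
    exact Rmult_comm.
Qed.

Lemma Derive_eval_x p x t : Derive (fun y => eval F p y t) x = eval F (dpoly_dx p) x t.
Proof. apply is_derive_unique, is_derive_eval_x. Qed.

Lemma Derive_eval_t p x t : Derive (fun s => eval F p x s) t = eval F (dpoly_dt p) x t.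
Proof. apply is_derive_unique, is_derive_eval_t. Qed.

Lemma Derive_n_eval p n x t :
  Derive_n (fun y => eval F p y t) n x = eval F (dpoly_dxn n p) x t.
Proof.
  revert x; induction n as [|n IH]; intro x; simpl; [reflexivity|].
  rewrite (Derive_ext _ (fun y => eval F (dpoly_dxn n p) y t)) by (intro; apply IH).
  apply Derive_eval_x.
Qed.

Lemma continuous_eval p x t : continuous (fun z : R * R => eval F p (fst z) (snd z)) (x, t).
Proof.
  induction p as [r|v w|p IHp q IHq|p IHp q IHq]; simpl.
  - apply continuous_const.
  - apply (HF v w x t).
  - apply (continuous_plus (fun z : R * R => eval F p (fst z) (snd z))
                           (fun z : R * R => eval F q (fst z) (snd z))); assumption.
  - apply (continuous_mult (fun z : R * R => eval F p (fst z) (snd z))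
                           (fun z : R * R => eval F q (fst z) (snd z))); assumption.
Qed.

Lemma continuous_eval_x p x t : continuous (fun y => eval F p y t) x.
Proof.
  apply (ex_derive_continuous (K := R_AbsRing) (V := R_NormedModule)).
  eexists. apply is_derive_eval_x.
Qed.

Lemma dpart_eval_dx f w p : (forall x t, dpart w f x t = eval F p x t) ->
  forall x t, dpart (true :: w) f x t = eval F (dpoly_dx p) x t.
Proof.
  intros H x t. cbn [dpart]. unfold dx.
  rewrite (Derive_ext _ (fun y => eval F p y t)) by (intro; apply H).
  apply Derive_eval_x.
Qed.

Lemma dpart_eval_dxn f w p n : (forall x t, dpart w f x t = eval F p x t) ->
  forall x t, dpart (repeat true n ++ w) f x t = eval F (dpoly_dxn n p) x t.
Proof.
  intro H. induction n as [|n IH]; [exact H|].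
  apply (dpart_eval_dx _ _ _ IH).
Qed.

Lemma dpart_eval_dt f w p : (forall x t, dpart w f x t = eval F p x t) ->
  forall x t, dpart (false :: w) f x t = eval F (dpoly_dt p) x t.
Proof.
  intros H x t. cbn [dpart]. unfold dt.
  rewrite (Derive_ext _ (fun s => eval F p x s)) by (intro; apply H).
  apply Derive_eval_t.
Qed.

Lemma RInt_eval_dx p a b t :
  RInt (fun x => eval F (dpoly_dx p) x t) a b = eval F p b t - eval F p a t.
Proof.
  rewrite (RInt_ext _ (Derive (fun y => eval F p y t)))
    by (intros; symmetry; apply Derive_eval_x).
  apply (RInt_Derive (fun y => eval F p y t)).
  - intros; eexists; apply is_derive_eval_x.
  - intros y _. apply (continuous_ext (fun z => eval F (dpoly_dx p) z t)).
    + intro; symmetry; apply Derive_eval_x.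
    + apply continuous_eval_x.
Qed.

Lemma is_derive_RInt_eval_t p a b t :
  is_derive (fun s => RInt (fun x => eval F p x s) a b) t
            (RInt (fun x => eval F (dpoly_dt p) x t) a b).
Proof.
  rewrite <- (RInt_ext (fun x => Derive (fun s => eval F p x s) t))
    by (intros; apply Derive_eval_t).
  apply (is_derive_RInt_param (fun s x => eval F p x s)).
  - apply filter_forall. intros s x _. eexists. apply is_derive_eval_t.
  - intros x _.
    rewrite (functional_extensionality (fun u v => Derive (fun z => eval F p v z) u)
                                       (fun u v => eval F (dpoly_dt p) v u))
      by (intro u; apply functional_extensionality; intro v; apply Derive_eval_t).
    apply continuity_2d_pt_swap, continuous_eval.
  - apply filter_forall. intro s.
    apply (ex_RInt_continuous (V := R_CompleteNormedModule)).
    intros; apply continuous_eval_x.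
Qed.

Lemma RInt_eval_conserved e phi L
  (Hflux : forall x t, eval F (dpoly_dt e) x t = eval F (dpoly_dx phi) x t)
  (Hends : forall t, eval F phi L t = eval F phi 0 t) t1 t2 :
  RInt (fun x => eval F e x t1) 0 L = RInt (fun x => eval F e x t2) 0 L.
Proof.
  assert (Hd : forall t, is_derive (fun s => RInt (fun x => eval F e x s) 0 L) t 0).
  { intro t. pose proof (is_derive_RInt_eval_t e 0 L t) as H.
    rewrite (RInt_ext _ (fun x => eval F (dpoly_dx phi) x t)), RInt_eval_dx, Hends, Rminus_eq_0
      in H by (intros; apply Hflux).
    exact H. }
  destruct (Rtotal_order t1 t2) as [Hlt | [-> | Hgt]].
  - apply (eq_is_derive (fun s => RInt (fun x => eval F e x s) 0 L)); auto.
  - reflexivity.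
  - symmetry. apply (eq_is_derive (fun s => RInt (fun x => eval F e x s) 0 L)); auto.
Qed.

Definition euler_poly (p0 p1 p2 : dpoly) : dpoly := p0 - dpoly_dx p1 + dpoly_dxn 2 p2.

Lemma euler_sum_eval (h : nat -> R -> R) p0 p1 p2 x t
  (H0 : forall y, h 0%nat y = eval F p0 y t)
  (H1 : forall y, h 1%nat y = eval F p1 y t)
  (H2 : forall y, h 2%nat y = eval F p2 y t) :
  sum_f_R0 (fun j => (-1) ^ j * Derive_n (h j) j x) 2 = eval F (euler_poly p0 p1 p2) x t.
Proof.
  cbn [sum_f_R0].
  rewrite (Derive_n_ext _ _ 0 x H0), (Derive_n_ext _ _ 1 x H1), (Derive_n_ext _ _ 2 x H2).
  rewrite !Derive_n_eval. unfold euler_poly. cbn [eval dpoly_dxn]. ring.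
Qed.

End Eval.

Fixpoint x_only (p : dpoly) : bool :=
  match p with
  | Cst _ => true
  | Var _ w => forallb (fun b => b) w
  | Add p q | Mul p q => x_only p && x_only q
  end.

Lemma eval_kenv_periodic k1 k2 L
  (Hper : forall x t, k1 (x + L) t = k1 x t /\ k2 (x + L) t = k2 x t) p :
  x_only p = true -> forall x t, eval (kenv k1 k2) p (x + L) t = eval (kenv k1 k2) p x t.
Proof.
  induction p as [r|v w|p IHp q IHq|p IHp q IHq]; simpl; intros Hx x t.
  - reflexivity.
  - assert (Hw : w = repeat true (length w)).
    { clear -Hx. induction w as [|b w IH]; [reflexivity|].
      apply andb_prop in Hx as [-> Hx]. simpl. f_equal. auto. }
    rewrite Hw. destruct v; apply dpart_periodic; intros; apply Hper.
  - apply andb_prop in Hx as [Hp Hq]. rewrite IHp, IHq by assumption. reflexivity.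
  - apply andb_prop in Hx as [Hp Hq]. rewrite IHp, IHq by assumption. reflexivity.
Qed.

(** * Evolution of the curvatures *)

Definition structure_rhs : dpoly := dpoly_dx (k1x 0 * gx 0) + k2x 0 * gx 0.

Definition flow_rhs : dpoly :=
  k1x 0 * gx 2 + k2x 0 * gx 1 - (k2x 1 + #(1/3) * (k1x 2 + #2 * k1x 0 ^ 2)) * gx 0.

Definition k1_flow : dpoly :=
  - k1x 4 - #2 * k2x 3 + #2 * k1x 0 * k1x 2 + #2 * k1x 1 ^ 2 + #4 * k1x 0 * k2x 1
  + #4 * k1x 1 * k2x 0.

Definition k2_flow : dpoly :=
  #(2/3) * k1x 5 + k2x 4 - #2 * k1x 0 * k1x 3 - #2 * k1x 0 * k2x 2 - #4 * k1x 1 * k1x 2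
  - #2 * k1x 1 * k2x 1 + #(4/3) * k1x 0 ^ 2 * k1x 1 + #4 * k2x 0 * k2x 1.

Definition k2_k1x_flow : dpoly :=
  - #(1/3) * k1x 5 - k2x 4 + #2 * k1x 0 * k2x 2 + #2 * k1x 1 * k1x 2 + #6 * k1x 1 * k2x 1
  + #4 * k1x 2 * k2x 0 + #(4/3) * k1x 0 ^ 2 * k1x 1 + #4 * k2x 0 * k2x 1.

Lemma flow_compatibility k1 k2 g (Hk1 : smooth2 k1) (Hk2 : smooth2 k2) (Hg : smooth2 g)
  (Hstruct : forall x t,
     dxn 3 g x t = dx (fun y s => k1 y s * g y s) x t + k2 x t * g x t)
  (Hflow : forall x t,
     dt g x t = k1 x t * dxn 2 g x t + k2 x t * dxn 1 g x t
       + (- (dx k2 x t + 1/3 * (dxn 2 k1 x t + 2 * (k1 x t)^2))) * g x t) x t :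
  (eval (kenv k1 k2) k2_k1x_flow x t - dt k2 x t - dt (dx k1) x t) * g x t
  + (eval (kenv k1 k2) k1_flow x t - dt k1 x t) * dxn 1 g x t = 0.
Proof.
  set (G := frame_env k1 k2 g).
  assert (HG : forall v, smooth2 (G v)) by (apply frame_env_smooth; assumption).
  assert (g3 : forall x t, dpart (repeat true 3) g x t = eval G structure_rhs x t).
  { intros y s. rewrite <- dxn_dpart, Hstruct. unfold structure_rhs. cbn [eval].
    rewrite <- (Derive_eval_x _ HG). reflexivity. }
  assert (g4 := dpart_eval_dxn _ HG _ _ _ 1 g3).
  assert (g5 := dpart_eval_dxn _ HG _ _ _ 2 g3).
  assert (g_t : forall x t, dpart [false] g x t = eval G flow_rhs x t).
  { intros y s. change (dt g y s = eval G flow_rhs y s). rewrite Hflow, !dxn_dpart.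
    unfold flow_rhs, G. simpl_dpoly. field. }
  assert (g_tx : forall x t, dpart [false; true] g x t = eval G (dpoly_dx flow_rhs) x t).
  { intros y s. rewrite (dpart_t_xn_comm g 1) by assumption.
    apply (dpart_eval_dx _ HG _ _ _ g_t). }
  (* the two expressions for g'''_t *)
  assert (key : eval G (dpoly_dxn 3 flow_rhs) x t = eval G (dpoly_dt structure_rhs) x t).
  { rewrite <- (dpart_eval_dxn _ HG _ _ _ 3 g_t), <- dpart_t_xn_comm by assumption.
    apply (dpart_eval_dt _ HG _ _ _ g3). }
  unfold structure_rhs, flow_rhs, G in *.
  simpl_dpoly in key g3 g4 g5 g_t g_tx.
  rewrite g_tx, g_t, g5, g4, g3 in key.
  apply Rminus_diag_eq in key. rewrite <- key.
  rewrite dxn_dpart. unfold k2_k1x_flow, k1_flow. simpl_dpoly. field.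
Qed.

Lemma det3_lindep_eq0 (A B : R) (u v w : nat -> R) : det3 u v w <> 0 ->
  (forall i, (i < 3)%nat -> A * u i + B * v i = 0) -> A = 0 /\ B = 0.
Proof.
  intros Hd Hc.
  assert (c0 := Hc 0%nat ltac:(auto)); assert (c1 := Hc 1%nat ltac:(auto));
    assert (c2 := Hc 2%nat ltac:(auto)).
  assert (HA : A * det3 u v w = 0).
  { transitivity (det3 (fun i => A * u i + B * v i) v w); [unfold det3; ring|].
    unfold det3; rewrite c0, c1, c2; ring. }
  assert (HB : B * det3 u v w = 0).
  { transitivity (det3 u (fun i => A * u i + B * v i) w); [unfold det3; ring|].
    unfold det3; rewrite c0, c1, c2; ring. }
  split.
  - destruct (Rmult_integral _ _ HA); [assumption | contradiction].
  - destruct (Rmult_integral _ _ HB); [assumption | contradiction].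
Qed.

Lemma curvature_evolution (gamma : nat -> R -> R -> R) (k1 k2 : R -> R -> R)
  (Hsg : forall i, (i < 3)%nat -> smooth2 (gamma i))
  (Hsk1 : smooth2 k1) (Hsk2 : smooth2 k2)
  (Harc : forall x t,
     det3 (fun i => gamma i x t) (fun i => dxn 1 (gamma i) x t)
          (fun i => dxn 2 (gamma i) x t) = 1)
  (Hstruct : forall i x t, (i < 3)%nat ->
     dxn 3 (gamma i) x t
     = dx (fun y s => k1 y s * gamma i y s) x t + k2 x t * gamma i x t)
  (Hflow : forall i x t, (i < 3)%nat ->
     dt (gamma i) x t
     = k1 x t * dxn 2 (gamma i) x t + k2 x t * dxn 1 (gamma i) x t
       + (- (dx k2 x t + 1/3 * (dxn 2 k1 x t + 2 * (k1 x t)^2)))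
         * gamma i x t) x t :
  dt k1 x t = eval (kenv k1 k2) k1_flow x t /\ dt k2 x t = eval (kenv k1 k2) k2_flow x t.
Proof.
  assert (Hcoef : forall x t,
    eval (kenv k1 k2) k2_k1x_flow x t - dt k2 x t - dt (dx k1) x t = 0 /\
    eval (kenv k1 k2) k1_flow x t - dt k1 x t = 0).
  { intros y s.
    apply (det3_lindep_eq0 _ _ (fun i => gamma i y s) (fun i => dxn 1 (gamma i) y s)
                                (fun i => dxn 2 (gamma i) y s)).
    - rewrite Harc. exact R1_neq_R0.
    - intros i Hi. apply flow_compatibility; auto. }
  assert (Hk1t : forall x t, dt k1 x t = eval (kenv k1 k2) k1_flow x t)
    by (intros y s; destruct (Hcoef y s); lra).
  split; [apply Hk1t|].
  assert (Hk1xt : dt (dx k1) x t = eval (kenv k1 k2) (dpoly_dx k1_flow) x t).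
  { change (dpart (false :: repeat true 1) k1 x t = eval (kenv k1 k2) (dpoly_dx k1_flow) x t).
    rewrite dpart_t_xn_comm by assumption.
    apply (dpart_eval_dx _ (kenv_smooth _ _ Hsk1 Hsk2) _ [false] _ Hk1t). }
  destruct (Hcoef x t) as [Hk2t _].
  transitivity (eval (kenv k1 k2) k2_k1x_flow x t - eval (kenv k1 k2) (dpoly_dx k1_flow) x t);
    [lra|].
  unfold k2_k1x_flow, k1_flow, k2_flow. simpl_dpoly. field.
Qed.

(** * Hamiltonian structure *)

Definition P1_poly (a b u v : dpoly) : dpoly :=
  - #2 * dpoly_dxn 3 u + dpoly_dx (a * u) + a * dpoly_dx u
  - dpoly_dxn 4 v + dpoly_dxn 2 (a * v) + #2 * dpoly_dx (b * v) + b * dpoly_dx v.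

Definition P2_poly (a b u v : dpoly) : dpoly :=
  dpoly_dxn 4 u - a * dpoly_dxn 2 u + #2 * b * dpoly_dx u + dpoly_dx (b * u)
  + #(2/3) * (dpoly_dxn 5 v + a * dpoly_dx (a * v) - a * dpoly_dxn 3 v - dpoly_dxn 3 (a * v))
  + b * dpoly_dxn 2 v - dpoly_dxn 2 (b * v).

Definition euler1_rho4 : dpoly :=
  euler_poly (- #2 * k1x 0 * k1x 2 - k1x 1 ^ 2 - #2 * k1x 0 * k2x 1 + #(4/9) * k1x 0 ^ 3
              + #2 * k2x 0 ^ 2)
             (- #2 * k1x 0 * k1x 1)
             (#(2/3) * k1x 2 + k2x 1 - k1x 0 ^ 2).

Definition euler2_rho4 : dpoly :=
  euler_poly (#4 * k1x 0 * k2x 0) (k1x 2 + #2 * k2x 1 - k1x 0 ^ 2) (#0).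

Section Operators.
Variable F : nat -> R -> R -> R.
Hypothesis HF : forall v, smooth2 (F v).

Lemma D_eval p n t x : Defs.D n (fun y => eval F p y t) x = eval F (dpoly_dxn n p) x t.
Proof. exact (Derive_n_eval F HF p n x t). Qed.

Lemma D_eval_mul p q n t x :
  Defs.D n (mulf (fun y => eval F p y t) (fun y => eval F q y t)) x = eval F (dpoly_dxn n (p * q)) x t.
Proof. exact (Derive_n_eval F HF (p * q) n x t). Qed.

Lemma Pop1_eval a b u v t x :
  Pop1 (fun y => eval F a y t) (fun y => eval F b y t) (fun y => eval F u y t)
       (fun y => eval F v y t) x = eval F (P1_poly a b u v) x t.
Proof. unfold Pop1. rewrite !D_eval_mul, !D_eval. unfold P1_poly. cbn [eval dpoly_dxn]. ring. Qed.

Lemma Pop2_eval a b u v t x :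
  Pop2 (fun y => eval F a y t) (fun y => eval F b y t) (fun y => eval F u y t)
       (fun y => eval F v y t) x = eval F (P2_poly a b u v) x t.
Proof. unfold Pop2. rewrite !D_eval_mul, !D_eval. unfold P2_poly. cbn [eval dpoly_dxn]. field. Qed.

Lemma Qop1_eval u v t x :
  Qop1 (fun y => eval F u y t) (fun y => eval F v y t) x = eval F (dpoly_dx v) x t.
Proof. apply (D_eval v 1). Qed.

Lemma Qop2_eval u v t x :
  Qop2 (fun y => eval F u y t) (fun y => eval F v y t) x = eval F (dpoly_dx u) x t.
Proof. apply (D_eval u 1). Qed.

End Operators.

Lemma P_Euler_rho2_flow F x t :
  eval F (P1_poly (k1x 0) (k2x 0) (k2x 0) (k1x 0)) x t = eval F k1_flow x t /\
  eval F (P2_poly (k1x 0) (k2x 0) (k2x 0) (k1x 0)) x t = eval F k2_flow x t.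
Proof. unfold P1_poly, P2_poly, k1_flow, k2_flow. simpl_dpoly. split; field. Qed.

Lemma Q_Euler_rho4_flow F x t :
  eval F (dpoly_dx euler2_rho4) x t = eval F k1_flow x t /\
  eval F (dpoly_dx euler1_rho4) x t = eval F k2_flow x t.
Proof.
  unfold euler1_rho4, euler2_rho4, euler_poly, k1_flow, k2_flow. simpl_dpoly. split; field.
Qed.

Ltac partial_derivative :=
  intro y; unfold pd1, pd2, rho2, rho4, upd; cbn [Nat.eqb];
  apply is_derive_unique; auto_derive; [exact I|];
  rewrite ?jet_dpart; simpl_dpoly; field.

Section Bihamiltonian.
Variables k1 k2 : R -> R -> R.
Hypotheses (Hk1 : smooth2 k1) (Hk2 : smooth2 k2).
Hypothesis Hk1t : forall x t, dt k1 x t = eval (kenv k1 k2) k1_flow x t.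
Hypothesis Hk2t : forall x t, dt k2 x t = eval (kenv k1 k2) k2_flow x t.

Let HG := kenv_smooth k1 k2 Hk1 Hk2.

Lemma Euler_rho2 t :
  Euler1 2 rho2 k1 k2 t = (fun x => eval (kenv k1 k2) (k2x 0) x t) /\
  Euler2 2 rho2 k1 k2 t = (fun x => eval (kenv k1 k2) (k1x 0) x t).
Proof.
  split; apply functional_extensionality; intro x;
    [ transitivity (eval (kenv k1 k2) (euler_poly (k2x 0) (#0) (#0)) x t)
    | transitivity (eval (kenv k1 k2) (euler_poly (k1x 0) (#0) (#0)) x t) ];
    solve [ apply euler_sum_eval; auto; partial_derivative
          | unfold euler_poly; simpl_dpoly; ring ].
Qed.

Lemma Euler_rho4 t :
  Euler1 2 rho4 k1 k2 t = (fun x => eval (kenv k1 k2) euler1_rho4 x t) /\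
  Euler2 2 rho4 k1 k2 t = (fun x => eval (kenv k1 k2) euler2_rho4 x t).
Proof.
  split; apply functional_extensionality; intro x;
    [unfold Euler1, euler1_rho4 | unfold Euler2, euler2_rho4];
    apply euler_sum_eval; auto; partial_derivative.
Qed.

Lemma curvature_flow_bihamiltonian x t :
  let K1 := fun y => k1 y t in
  let K2 := fun y => k2 y t in
  dt k1 x t = Pop1 K1 K2 (Euler1 2 rho2 k1 k2 t) (Euler2 2 rho2 k1 k2 t) x /\
  dt k2 x t = Pop2 K1 K2 (Euler1 2 rho2 k1 k2 t) (Euler2 2 rho2 k1 k2 t) x /\
  dt k1 x t = Qop1 (Euler1 2 rho4 k1 k2 t) (Euler2 2 rho4 k1 k2 t) x /\
  dt k2 x t = Qop2 (Euler1 2 rho4 k1 k2 t) (Euler2 2 rho4 k1 k2 t) x.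
Proof.
  cbv zeta.
  destruct (Euler_rho2 t) as [-> ->]. destruct (Euler_rho4 t) as [-> ->].
  change (fun y => k1 y t) with (fun y => eval (kenv k1 k2) (k1x 0) y t).
  change (fun y => k2 y t) with (fun y => eval (kenv k1 k2) (k2x 0) y t).
  rewrite (Pop1_eval _ HG), (Pop2_eval _ HG), (Qop1_eval _ HG), (Qop2_eval _ HG), Hk1t, Hk2t.
  destruct (P_Euler_rho2_flow (kenv k1 k2) x t), (Q_Euler_rho4_flow (kenv k1 k2) x t).
  auto.
Qed.

End Bihamiltonian.

(** * Conservation laws *)

Definition flux_k1 : dpoly := - k1x 3 - #2 * k2x 2 + #2 * k1x 0 * k1x 1 + #4 * k1x 0 * k2x 0.

Definition flux_rho2 : dpoly :=
  #(1/3) * k1x 0 ^ 4 - #2 * k1x 0 ^ 2 * k1x 2 - #2 * k1x 0 ^ 2 * k2x 1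
  + #2 * k1x 0 * k1x 1 * k2x 0 + #(2/3) * k1x 0 * k1x 4 + #4 * k1x 0 * k2x 0 ^ 2
  + k1x 0 * k2x 3 - #(2/3) * k1x 1 * k1x 3 - k1x 1 * k2x 2 + #(1/3) * k1x 2 ^ 2
  + k1x 2 * k2x 1 - k1x 3 * k2x 0 - #2 * k2x 0 * k2x 2 + k2x 1 ^ 2.

Definition dens_rho4 : dpoly :=
  #(1/3) * k1x 2 ^ 2 + k1x 2 * (k2x 1 - k1x 0 ^ 2) - k1x 0 * k1x 1 ^ 2 + k2x 1 ^ 2
  - k1x 0 ^ 2 * k2x 1 + #(1/9) * k1x 0 ^ 4 + #2 * k1x 0 * k2x 0 ^ 2.

Definition flux_rho4 : dpoly :=
  - #(4/9) * k1x 0 ^ 4 * k1x 1 + #(16/9) * k1x 0 ^ 4 * k2x 0 - #(4/9) * k1x 0 ^ 3 * k1x 3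
  - #(26/9) * k1x 0 ^ 3 * k2x 2 - #(14/3) * k1x 0 ^ 2 * k1x 1 * k1x 2
  - #(22/3) * k1x 0 ^ 2 * k1x 1 * k2x 1 - #12 * k1x 0 ^ 2 * k1x 2 * k2x 0
  + #(1/3) * k1x 0 ^ 2 * k1x 5 - #12 * k1x 0 ^ 2 * k2x 0 * k2x 1 + k1x 0 ^ 2 * k2x 4
  - #2 * k1x 0 * k1x 1 ^ 3 - #4 * k1x 0 * k1x 1 ^ 2 * k2x 0 + #(4/3) * k1x 0 * k1x 1 * k1x 4
  + #4 * k1x 0 * k1x 1 * k2x 0 ^ 2 + #2 * k1x 0 * k1x 1 * k2x 3
  + #(8/3) * k1x 0 * k1x 2 * k2x 2 - #(8/3) * k1x 0 * k1x 3 * k2x 1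
  + #(8/3) * k1x 0 * k1x 4 * k2x 0 + #8 * k1x 0 * k2x 0 ^ 3 + #4 * k1x 0 * k2x 0 * k2x 3
  - #(1/3) * k1x 1 ^ 2 * k1x 3 + #(4/3) * k1x 1 * k1x 2 * k2x 1
  - #(8/3) * k1x 1 * k1x 3 * k2x 0 - #4 * k1x 1 * k2x 0 * k2x 2 + #4 * k1x 1 * k2x 1 ^ 2
  + #(8/3) * k1x 2 ^ 2 * k2x 0 + #8 * k1x 2 * k2x 0 * k2x 1 - #(1/3) * k1x 2 * k2x 4
  - #2 * k1x 3 * k2x 0 ^ 2 + #(1/3) * k1x 3 * k2x 3 - #(1/3) * k1x 4 * k2x 2
  + #(1/3) * k1x 5 * k2x 1 - #4 * k2x 0 ^ 2 * k2x 2 + #8 * k2x 0 * k2x 1 ^ 2.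

Section ConservationLaws.
Variables k1 k2 : R -> R -> R.
Hypotheses (Hk1 : smooth2 k1) (Hk2 : smooth2 k2).
Hypothesis Hk1t : forall x t, dt k1 x t = eval (kenv k1 k2) k1_flow x t.
Hypothesis Hk2t : forall x t, dt k2 x t = eval (kenv k1 k2) k2_flow x t.

Let HG := kenv_smooth k1 k2 Hk1 Hk2.

Lemma dt_k1x_eval n x t :
  dpart (false :: repeat true n) k1 x t = eval (kenv k1 k2) (dpoly_dxn n k1_flow) x t.
Proof. rewrite dpart_t_xn_comm by assumption. exact (dpart_eval_dxn _ HG _ [false] _ n Hk1t x t). Qed.

Lemma dt_k2x_eval n x t :
  dpart (false :: repeat true n) k2 x t = eval (kenv k1 k2) (dpoly_dxn n k2_flow) x t.
Proof. rewrite dpart_t_xn_comm by assumption. exact (dpart_eval_dxn _ HG _ [false] _ n Hk2t x t). Qed.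

Ltac conservation_law :=
  intros x t;
  pose proof (conj (dt_k1x_eval 0 x t) (dt_k2x_eval 0 x t)) as [A0 B0];
  pose proof (conj (dt_k1x_eval 1 x t) (dt_k2x_eval 1 x t)) as [A1 B1];
  pose proof (conj (dt_k1x_eval 2 x t) (dt_k2x_eval 2 x t)) as [A2 B2];
  unfold k1_flow, k2_flow in A0, B0, A1, B1, A2, B2;
  simpl_dpoly in A0 B0 A1 B1 A2 B2;
  unfold flux_k1, flux_rho2, dens_rho4, flux_rho4; simpl_dpoly;
  rewrite ?A0, ?A1, ?A2, ?B0, ?B1, ?B2; field.

Lemma conservation_k1 x t :
  eval (kenv k1 k2) (dpoly_dt (k1x 0)) x t = eval (kenv k1 k2) (dpoly_dx flux_k1) x t.
Proof. revert x t. conservation_law. Qed.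

Lemma conservation_rho2 x t :
  eval (kenv k1 k2) (dpoly_dt (k1x 0 * k2x 0)) x t = eval (kenv k1 k2) (dpoly_dx flux_rho2) x t.
Proof. revert x t. conservation_law. Qed.

Lemma conservation_rho4 x t :
  eval (kenv k1 k2) (dpoly_dt dens_rho4) x t = eval (kenv k1 k2) (dpoly_dx flux_rho4) x t.
Proof. revert x t. conservation_law. Qed.

Lemma intdens_conserved rho dens flux L
  (Hper : forall x t, k1 (x + L) t = k1 x t /\ k2 (x + L) t = k2 x t)
  (Hdens : forall x t, rho (jet k1 t x) (jet k2 t x) = eval (kenv k1 k2) dens x t)
  (Hflux : forall x t,
     eval (kenv k1 k2) (dpoly_dt dens) x t = eval (kenv k1 k2) (dpoly_dx flux) x t)
  (Hx : x_only flux = true) t1 t2 :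
  intdens rho k1 k2 L t1 = intdens rho k1 k2 L t2.
Proof.
  unfold intdens. rewrite !(RInt_ext (fun x => rho _ _) (fun x => eval (kenv k1 k2) dens x _))
    by (intros; apply Hdens).
  apply (RInt_eval_conserved _ HG _ flux); [exact Hflux|].
  intro t. rewrite <- (Rplus_0_l L) at 1. apply eval_kenv_periodic; assumption.
Qed.

Lemma curvature_flow_conservation L
  (Hper : forall x t, k1 (x + L) t = k1 x t /\ k2 (x + L) t = k2 x t) t1 t2 :
  intdens rho2 k1 k2 L t1 = intdens rho2 k1 k2 L t2 /\
  intdens rho4 k1 k2 L t1 = intdens rho4 k1 k2 L t2 /\
  intdens rho_k1 k1 k2 L t1 = intdens rho_k1 k1 k2 L t2.
Proof.
  repeat split.
  - apply (intdens_conserved _ (k1x 0 * k2x 0) flux_rho2); auto using conservation_rho2.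
  - apply (intdens_conserved _ dens_rho4 flux_rho4); auto using conservation_rho4.
    intros; unfold rho4, dens_rho4; rewrite !jet_dpart; simpl_dpoly; field.
  - apply (intdens_conserved _ (k1x 0) flux_k1); auto using conservation_k1.
Qed.

End ConservationLaws.

Theorem mainTheorem3
  (gamma : nat -> R -> R -> R) (k1 k2 : R -> R -> R)
  (Hsg : forall i, (i < 3)%nat -> smooth2 (gamma i))
  (Hsk1 : smooth2 k1) (Hsk2 : smooth2 k2)
  (Harc : forall x t,
     det3 (fun i => gamma i x t) (fun i => dxn 1 (gamma i) x t)
          (fun i => dxn 2 (gamma i) x t) = 1)
  (Hstruct : forall i x t, (i < 3)%nat ->
     dxn 3 (gamma i) x t
     = dx (fun y s => k1 y s * gamma i y s) x t + k2 x t * gamma i x t)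
  (Hflow : forall i x t, (i < 3)%nat ->
     dt (gamma i) x t
     = k1 x t * dxn 2 (gamma i) x t + k2 x t * dxn 1 (gamma i) x t
       + (- (dx k2 x t + 1/3 * (dxn 2 k1 x t + 2 * (k1 x t)^2)))
         * gamma i x t) :
  (forall x t,
     let K1 := fun y => k1 y t in
     let K2 := fun y => k2 y t in
     dt k1 x t = Pop1 K1 K2 (Euler1 2 rho2 k1 k2 t) (Euler2 2 rho2 k1 k2 t) x /\
     dt k2 x t = Pop2 K1 K2 (Euler1 2 rho2 k1 k2 t) (Euler2 2 rho2 k1 k2 t) x /\
     dt k1 x t = Qop1 (Euler1 2 rho4 k1 k2 t) (Euler2 2 rho4 k1 k2 t) x /\
     dt k2 x t = Qop2 (Euler1 2 rho4 k1 k2 t) (Euler2 2 rho4 k1 k2 t) x)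
  /\
  (forall L : R, 0 < L ->
     (forall x t, k1 (x + L) t = k1 x t /\ k2 (x + L) t = k2 x t) ->
     forall t1 t2,
       intdens rho2 k1 k2 L t1 = intdens rho2 k1 k2 L t2 /\
       intdens rho4 k1 k2 L t1 = intdens rho4 k1 k2 L t2 /\
       intdens rho_k1 k1 k2 L t1 = intdens rho_k1 k1 k2 L t2).
Proof.
  pose proof (curvature_evolution gamma k1 k2 Hsg Hsk1 Hsk2 Harc Hstruct Hflow) as Hevol.
  split.
  - intros x t.
    apply curvature_flow_bihamiltonian; auto; intros; apply Hevol.
  - intros L _ Hper t1 t2.
    apply curvature_flow_conservation; auto; intros; apply Hevol.
Qed.
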